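(* Let $n\ge 3$ and let $\Sigma$ be an $n\times n$ matrix with entries $\pm1$; let $\mu(\Sigma)$ denote the number of entries of $\Sigma$ equal to $-1$. (i) If $n=2m+1$ is odd and $\mu(\Sigma)\ge mn-(m-1)$, then there is a matrix $\Sigma'$ equivalent to $\Sigma$ with $\mu(\Sigma')<\mu(\Sigma)$. (ii) If $n=2m$ is even and $\mu(\Sigma)\ge mn-m$, then there is a matrix $\Sigma'$ equivalent to $\Sigma$ with $\mu(\Sigma')<\mu(\Sigma)$.
   Context: Two $r\times n$ matrices with entries $\pm1$ are equivalent if one is obtained from the other by a finite succession of the operations: interchanging two rows or two columns; negating a row or a column. *)

From mathcomp Require Import all_boot all_algebra.
From Stdlib Require Import Relations.
Set Implicit Arguments. Unset Strict Implicit. Unset Printing Implicit Defensive.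
Import GRing.Theory.
Local Open Scope ring_scope.

Definition pm1_matrix (r n : nat) (S : 'M[int]_(r, n)) : Prop :=
  forall i j, S i j = 1 \/ S i j = -1.

Definition neg_row (r n : nat) (i0 : 'I_r) (S : 'M[int]_(r, n)) : 'M[int]_(r, n) :=
  \matrix_(i, j) (if i == i0 then - S i j else S i j).
Definition neg_col (r n : nat) (j0 : 'I_n) (S : 'M[int]_(r, n)) : 'M[int]_(r, n) :=
  \matrix_(i, j) (if j == j0 then - S i j else S i j).

Inductive elem_op (r n : nat) : 'M[int]_(r, n) -> 'M[int]_(r, n) -> Prop :=
  | op_swap_rows (i1 i2 : 'I_r) S : elem_op S (xrow i1 i2 S)
  | op_swap_cols (j1 j2 : 'I_n) S : elem_op S (xcol j1 j2 S)
  | op_neg_row (i : 'I_r) S : elem_op S (neg_row i S)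
  | op_neg_col (j : 'I_n) S : elem_op S (neg_col j S).

Definition mx_equiv (r n : nat) (S T : 'M[int]_(r, n)) : Prop :=
  clos_refl_trans _ (@elem_op r n) S T.

Definition mu (r n : nat) (S : 'M[int]_(r, n)) : nat :=
  #|[set ij : 'I_r * 'I_n | S ij.1 ij.2 == -1]|.

(* Negating the rows in P and the columns in Q changes mu by
     d(P, Q) = sum_{i in P} R_i + sum_{j in Q} C_j - 2 sum_{i in P, j in Q} s_ij,
   where R_i, C_j are the row and column sums, so it suffices to find P, Q with
   d(P, Q) < 0.  A negative row or column sum gives one.  Otherwise every line has
   at most m entries -1, and the bound on mu leaves fewer than m (odd case) or at
   most m (even case) "short" lines with fewer than m entries -1.
   For n = 2m+1 some column c is full; it has m+1 entries +1, two of which lie in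
   full rows a, b, and d({a,b},{c}) = 1 + 1 + 1 - 4 < 0.
   For n = 2m, a +1 at the crossing of a full row and a full column gives
   d = 0 + 0 - 2.  If there is none, the full rows are exactly the negative entries
   of every full column, and negating the short rows and the full columns gives
   d <= 2m - 2m * m < 0. *)

From mathcomp Require Import all_boot all_order all_algebra.
From mathcomp Require Import zify ring.
From Stdlib Require Import Relations.
Set Implicit Arguments. Unset Strict Implicit. Unset Printing Implicit Defensive.
Import Order.TTheory GRing.Theory.
Local Open Scope ring_scope.

Lemma sum_indicator (R : pzSemiRingType) (I : finType) (A : {set I}) (F : I -> R) :
  \sum_i (i \in A)%:R * F i = \sum_(i in A) F i.
Proof.
by rewrite [RHS]big_mkcond; apply: eq_bigr => i _; case: (i \in A); rewrite ?mul1r ?mul0r.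
Qed.

Lemma sum_pm1 (I : finType) (f : I -> int) : (forall i, f i = 1 \/ f i = -1) ->
  \sum_i f i = #|I|%:Z - 2 * #|[set i | f i == -1]|%:Z.
Proof.
move=> f_pm1.
transitivity (\sum_i (1 - 2 * ((i \in [set i | f i == -1])%:R * 1)) : int).
  by apply: eq_bigr => i _; rewrite inE; case: (f_pm1 i) => ->.
by rewrite sumrB -mulr_sumr sum_indicator !sumr_const !natz.
Qed.

Lemma leq_sum_card_lt (I : finType) (f : I -> nat) m : (forall i, f i <= m)%N ->
  (\sum_i f i + #|[set i | f i < m]| <= m * #|I|)%N.
Proof.
move=> le_f_m; rewrite -sum1dep_card [X in (_ + X)%N]big_mkcond -big_split /=.
rewrite mulnC -sum_nat_const.
by apply: leq_sum => i _; have := le_f_m i; case: ltnP => /=; lia.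
Qed.

Lemma negb_if_opp (V : zmodType) (b : bool) (x : V) :
  (if ~~ b then - x else x) = - (if b then - x else x).
Proof. by case: b; rewrite ?opprK. Qed.

Lemma sum_affine (R : pzRingType) (I : finType) (F G H K : I -> R) :
  \sum_i (F i - 2 * (G i + H i - 2 * K i)) =
  \sum_i F i - 2 * (\sum_i G i + \sum_i H i - 2 * \sum_i K i).
Proof. by rewrite sumrB -mulr_sumr sumrB big_split -mulr_sumr. Qed.

Section Flips.
Variables r n : nat.
Implicit Types (S : 'M[int]_(r, n)) (P : {set 'I_r}) (Q : {set 'I_n}).

Definition flipm P Q S : 'M[int]_(r, n) :=
  \matrix_(i, j) (if (i \in P) (+) (j \in Q) then - S i j else S i j).

Lemma flipm0 S : flipm set0 set0 S = S.
Proof. by apply/matrixP => i j; rewrite mxE !inE. Qed.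

Lemma flipm_setU1l a P Q S : a \notin P -> flipm (a |: P) Q S = neg_row a (flipm P Q S).
Proof.
move=> aP; apply/matrixP => i j; rewrite !mxE in_setU1.
by have [->|//] := eqVneq i a; rewrite (negbTE aP) negb_if_opp.
Qed.

Lemma flipm_setU1r b P Q S : b \notin Q -> flipm P (b |: Q) S = neg_col b (flipm P Q S).
Proof.
move=> bQ; apply/matrixP => i j; rewrite !mxE in_setU1.
by have [->|//] := eqVneq j b; rewrite (negbTE bQ) addbT addbF negb_if_opp.
Qed.

Lemma mx_equiv_flipm P Q S : mx_equiv S (flipm P Q S).
Proof.
rewrite -(set_enum P) -(set_enum Q).
elim: (enum P) (enum_uniq P) => [_|a s IHs /andP [a_s s_uniq]]; last first.
  rewrite set_cons flipm_setU1l ?inE //.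
  by apply: rt_trans (IHs s_uniq) _; apply/rt_step/op_neg_row.
elim: (enum Q) (enum_uniq Q) => [_|b t IHt /andP [b_t t_uniq]].
  by rewrite !set_nil flipm0; apply: rt_refl.
rewrite set_cons flipm_setU1r ?inE //.
by apply: rt_trans (IHt t_uniq) _; apply/rt_step/op_neg_col.
Qed.

Definition rowsum S i := \sum_j S i j.
Definition colsum S j := \sum_i S i j.
Definition mxsum S := \sum_i \sum_j S i j.

Definition flip_delta P Q S : int :=
  \sum_(i in P) rowsum S i + \sum_(j in Q) colsum S j
  - 2 * \sum_(i in P) \sum_(j in Q) S i j.

Lemma mxsum_flipm P Q S : mxsum (flipm P Q S) = mxsum S - 2 * flip_delta P Q S.
Proof.
(* Read as 0/1, [p (+) q] is p + q - 2 p q. *)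
have flipmE i j : flipm P Q S i j = S i j - 2 * ((i \in P)%:R * S i j
    + (j \in Q)%:R * S i j - 2 * ((i \in P)%:R * ((j \in Q)%:R * S i j))).
  by rewrite mxE; case: (i \in P); case: (j \in Q) => /=; ring.
have rowsE : \sum_i \sum_j (i \in P)%:R * S i j = \sum_(i in P) rowsum S i.
  by rewrite -sum_indicator; apply: eq_bigr => i _; rewrite mulr_sumr.
have colsE : \sum_i \sum_j (j \in Q)%:R * S i j = \sum_(j in Q) colsum S j.
  by rewrite exchange_big -sum_indicator; apply: eq_bigr => j _; rewrite mulr_sumr.
have blockE : \sum_i \sum_j (i \in P)%:R * ((j \in Q)%:R * S i j)
    = \sum_(i in P) \sum_(j in Q) S i j.
  by rewrite -sum_indicator; apply: eq_bigr => i _; rewrite -mulr_sumr sum_indicator.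
rewrite /mxsum /flip_delta -rowsE -colsE -blockE -sum_affine.
by apply: eq_bigr => i _; rewrite -sum_affine; apply: eq_bigr => j _.
Qed.

Definition row_negs S i : nat := #|[set j | S i j == -1]|.
Definition col_negs S j : nat := #|[set i | S i j == -1]|.

Lemma mu_sum_row_negs S : mu S = (\sum_i row_negs S i)%N.
Proof.
rewrite /mu /row_negs; under eq_bigr do rewrite -sum1dep_card.
by rewrite pair_big_dep /= sum1dep_card.
Qed.

Lemma mu_sum_col_negs S : mu S = (\sum_j col_negs S j)%N.
Proof.
rewrite mu_sum_row_negs /row_negs /col_negs.
under eq_bigr do rewrite -sum1dep_card big_mkcond.
by rewrite exchange_big; apply: eq_bigr => j _; rewrite -sum1dep_card [RHS]big_mkcond.
Qed.

Lemma mu_card_short_rows S m : (forall i, row_negs S i <= m)%N ->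
  (mu S + #|[set i | row_negs S i < m]| <= m * r)%N.
Proof. by rewrite mu_sum_row_negs -[in (m * r)%N](card_ord r); apply: leq_sum_card_lt. Qed.

Lemma mu_card_short_cols S m : (forall j, col_negs S j <= m)%N ->
  (mu S + #|[set j | col_negs S j < m]| <= m * n)%N.
Proof. by rewrite mu_sum_col_negs -[in (m * n)%N](card_ord n); apply: leq_sum_card_lt. Qed.

Section SignMatrix.
Variable S : 'M[int]_(r, n).
Hypothesis pmS : pm1_matrix S.

Lemma mxsum_pm1 : mxsum S = (r * n)%:Z - 2 * (mu S)%:Z.
Proof.
rewrite /mxsum pair_bigA /= (sum_pm1 (fun p => pmS p.1 p.2)).
by rewrite card_prod !card_ord.
Qed.

Lemma rowsum_pm1 i : rowsum S i = n%:Z - 2 * (row_negs S i)%:Z.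
Proof. by rewrite /rowsum (sum_pm1 (pmS i)) card_ord. Qed.

Lemma colsum_pm1 j : colsum S j = r%:Z - 2 * (col_negs S j)%:Z.
Proof. by rewrite /colsum (sum_pm1 (pmS^~ j)) card_ord. Qed.

Lemma flipm_pm1 P Q : pm1_matrix (flipm P Q S).
Proof.
move=> i j; rewrite mxE; case: (_ (+) _); last exact: pmS.
by case: (pmS i j) => ->; [right | left].
Qed.

End SignMatrix.

Lemma mu_flipm P Q S : pm1_matrix S ->
  (mu (flipm P Q S))%:Z = (mu S)%:Z + flip_delta P Q S.
Proof.
move=> pmS; have := mxsum_flipm P Q S.
by rewrite (mxsum_pm1 (flipm_pm1 pmS P Q)) mxsum_pm1 //; lia.
Qed.

Definition reducible S := exists S', mx_equiv S S' /\ (mu S' < mu S)%N.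

Lemma reducible_flipm P Q S : pm1_matrix S -> flip_delta P Q S < 0 -> reducible S.
Proof.
move=> pmS delta_lt0; exists (flipm P Q S); split; first exact: mx_equiv_flipm.
by have := mu_flipm P Q pmS; lia.
Qed.

Lemma flip_delta_block P Q S :
  (forall i, i \notin P -> rowsum S i = 0) -> (forall j, j \in Q -> colsum S j = 0) ->
  (forall i j, i \in P -> j \in Q -> S i j = 1) ->
  flip_delta P Q S = mxsum S - 2 * (#|P| * #|Q|)%:Z.
Proof.
move=> rows_out_P cols_Q block_P_Q; rewrite /flip_delta.
have -> : \sum_(j in Q) colsum S j = 0 by apply: big1.
have -> : \sum_(i in P) \sum_(j in Q) S i j = \sum_(i in P) \sum_(j in Q) 1.
  by apply: eq_bigr => i iP; apply: eq_bigr => j jQ; apply: block_P_Q.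
rewrite !sumr_const -mulrnA mulnC natz.
have -> : mxsum S = \sum_(i in P) rowsum S i.
  by rewrite /mxsum (bigID (mem P)) /= [X in _ + X]big1 ?addr0 // => i /rows_out_P.
by rewrite addr0 natz.
Qed.

Lemma reducible_neg_block S (A : {set 'I_r}) (B : {set 'I_n}) : pm1_matrix S ->
  (forall i, i \in A -> rowsum S i = 0) -> (forall j, j \in B -> colsum S j = 0) ->
  (forall j, j \in B -> [set i | S i j == -1] = A) ->
  mxsum S < 2 * (#|~: A| * #|B|)%:Z -> reducible S.
Proof.
move=> pmS rows_A cols_B negs_B mxsum_lt.
apply: (reducible_flipm (P := ~: A) (Q := B) pmS).
rewrite flip_delta_block //; first by lia.
- by move=> i; rewrite in_setC negbK; apply: rows_A.
move=> i j + jB; rewrite in_setC -(negs_B j jB) inE.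
by case: (pmS i j) => ->.
Qed.

Lemma reducible_or_lines_nonneg S : pm1_matrix S ->
  reducible S \/ (forall i, 0 <= rowsum S i) /\ (forall j, 0 <= colsum S j).
Proof.
move=> pmS; have [i rowsum_lt0 | rows_ge0] := pickP (fun i => rowsum S i < 0).
  left; apply: (reducible_flipm (P := [set i]) (Q := set0) pmS).
  by rewrite /flip_delta !big_set1 !big_set0; lia.
have [j colsum_lt0 | cols_ge0] := pickP (fun j => colsum S j < 0).
  left; apply: (reducible_flipm (P := set0) (Q := [set j]) pmS).
  by rewrite /flip_delta !big_set1 !big_set0; lia.
by right; split=> k; rewrite leNgt ?rows_ge0 ?cols_ge0.
Qed.

End Flips.

Section NonnegLines.
Variables (n m : nat) (S : 'M[int]_(n, n)).
Hypotheses (pmS : pm1_matrix S) (rows_ge0 : forall i, 0 <= rowsum S i)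
  (cols_ge0 : forall j, 0 <= colsum S j) (n_le : (n <= 2 * m + 1)%N).

Local Notation short_rows := [set i | (row_negs S i < m)%N].
Local Notation short_cols := [set j | (col_negs S j < m)%N].

Lemma row_negs_le i : (row_negs S i <= m)%N.
Proof. by have := rows_ge0 i; rewrite rowsum_pm1 //; lia. Qed.

Lemma col_negs_le j : (col_negs S j <= m)%N.
Proof. by have := cols_ge0 j; rewrite colsum_pm1 //; lia. Qed.

Lemma full_row i : i \notin short_rows -> row_negs S i = m.
Proof. by rewrite inE => ?; have := row_negs_le i; lia. Qed.

Lemma full_col j : j \notin short_cols -> col_negs S j = m.
Proof. by rewrite inE => ?; have := col_negs_le j; lia. Qed.

Lemma reducible_odd : n = (2 * m + 1)%N -> (m * n - (m - 1) <= mu S)%N -> (0 < m)%N ->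
  reducible S.
Proof.
move=> n_odd mu_ge m_gt0.
have card_short_rows : (mu S + #|short_rows| <= m * n)%N :=
  mu_card_short_rows row_negs_le.
have card_short_cols : (mu S + #|short_cols| <= m * n)%N :=
  mu_card_short_cols col_negs_le.
have /card_gt0P [c] : (0 < #|~: short_cols|)%N.
  by have := cardsC short_cols; rewrite card_ord; lia.
rewrite in_setC => /full_col full_c.
pose pos_c := [set i | S i c == 1].
have card_pos_c : #|pos_c| = (m + 1)%N.
  have <- : ~: [set i | S i c == -1] = pos_c.
    by apply/setP => i; rewrite !inE; case: (pmS i c) => ->.
  by have := cardsC [set i | S i c == -1]; rewrite card_ord -/(col_negs S c); lia.
have : (1 < #|pos_c :\: short_rows|)%N.
  have := cardsID short_rows pos_c; have := subset_leq_card (subsetIr pos_c short_rows).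
  by lia.
case/card_gt1P => a [b [+ + a_ne_b]]; rewrite !in_setD.
move=> /andP [/full_row a_full + ] /andP [/full_row b_full +]; rewrite !inE.
move=> /eqP Sac /eqP Sbc.
apply: (reducible_flipm (P := [set a; b]) (Q := [set c]) pmS).
rewrite /flip_delta big_setU1 ?inE //= !big_set1 big_setU1 ?inE //= !big_set1.
by rewrite !rowsum_pm1 // colsum_pm1 // Sac Sbc full_c a_full b_full; lia.
Qed.

Lemma reducible_full_cross_neg : n = (2 * m)%N -> (m * n - m <= mu S)%N -> (1 < m)%N ->
  (forall i j, i \notin short_rows -> j \notin short_cols -> S i j = -1) ->
  reducible S.
Proof.
move=> n_even mu_ge m_gt1 neg_cross.
have card_short_rows : (mu S + #|short_rows| <= m * n)%N :=
  mu_card_short_rows row_negs_le.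
have card_short_cols : (mu S + #|short_cols| <= m * n)%N :=
  mu_card_short_cols col_negs_le.
have := cardsC short_rows; have := cardsC short_cols; rewrite !card_ord => cols_n rows_n.
have full_col_negs j : j \notin short_cols -> [set i | S i j == -1] = ~: short_rows.
  move=> j_full; apply/eqP; rewrite eq_sym eqEcard -/(col_negs S j) full_col //.
  apply/andP; split; last by lia.
  by apply/subsetP => i; rewrite in_setC => i_full; rewrite inE neg_cross.
have /card_gt0P [c0] : (0 < #|~: short_cols|)%N by lia.
rewrite in_setC => c0_full.
have card_full_rows : #|~: short_rows| = m.
  by rewrite -(full_col_negs c0) // -/(col_negs S c0) full_col.
apply: (reducible_neg_block (A := ~: short_rows) (B := ~: short_cols) pmS).
- by move=> i; rewrite in_setC => /full_row; rewrite rowsum_pm1 // => ->; lia.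
- by move=> j; rewrite in_setC => /full_col; rewrite colsum_pm1 // => ->; lia.
- by move=> j; rewrite in_setC; apply: full_col_negs.
have card_short_rows_m : #|short_rows| = m by lia.
rewrite setCK mxsum_pm1 // card_short_rows_m.
have : (m <= #|~: short_cols|)%N by lia.
set k := #|~: short_cols| => k_ge.
by nia.
Qed.

Lemma reducible_even : n = (2 * m)%N -> (m * n - m <= mu S)%N -> (1 < m)%N ->
  reducible S.
Proof.
move=> n_even mu_ge m_gt1.
have [[a c] /= /and3P [/full_row a_full /full_col c_full /eqP Sac] | no_pos_cross] :=
  pickP (fun p => [&& p.1 \notin short_rows, p.2 \notin short_cols & S p.1 p.2 == 1]).
  apply: (reducible_flipm (P := [set a]) (Q := [set c]) pmS).
  by rewrite /flip_delta !big_set1 rowsum_pm1 // colsum_pm1 // a_full c_full Sac; lia.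
apply: reducible_full_cross_neg => // i j i_full j_full.
by have := no_pos_cross (i, j); rewrite /= i_full j_full /=; case: (pmS i j) => ->.
Qed.

End NonnegLines.

Theorem proposition3p4 (n : nat) (S : 'M[int]_(n, n)) :
  (3 <= n)%N -> pm1_matrix S ->
  (forall m : nat, n = (2 * m + 1)%N -> (m * n - (m - 1) <= mu S)%N ->
     exists S' : 'M[int]_(n, n), mx_equiv S S' /\ (mu S' < mu S)%N) /\
  (forall m : nat, n = (2 * m)%N -> (m * n - m <= mu S)%N ->
     exists S' : 'M[int]_(n, n), mx_equiv S S' /\ (mu S' < mu S)%N).
Proof.
move=> n_ge3 pmS.
have [S_reducible | [rows_ge0 cols_ge0]] := reducible_or_lines_nonneg pmS.
  by split=> m _ _.
split=> m n_eq mu_ge.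
  by apply: (reducible_odd (m := m) pmS rows_ge0 cols_ge0) => //; lia.
by apply: (reducible_even (m := m) pmS rows_ge0 cols_ge0) => //; lia.
Qed.
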